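(* In the Banach space $\ell^\infty$ with the norm $\|\cdot\|_\infty$ topology, the set $A=\{e_1\}\cup\{e_1+e_n : n\in\mathbb{N}, n\ge 2\}$ is topologically independent but not minimal; in particular, it is not topologically linearly independent.
   Context: $e_i\in\ell^\infty$ denotes the sequence with $1$ in coordinate $i$ and $0$ elsewhere. A subset $A\subseteq X\setminus\{0\}$ of a topological vector space $X$ is topologically independent if for every neighborhood $W$ of $0$ there is a neighborhood $U$ of $0$ such that for every finite $F\subseteq A$ and integers $\{z_a: a\in F\}$, $\sum_{a\in F}z_a a\in U$ implies $z_a a\in W$ for all $a\in F$; topologically linearly independent is defined the same way with real coefficients instead of integers. $A$ is minimal if $a\notin\overline{\langle A\setminus\{a\}\rangle_{\mathbb{R}}}$ for every $a\in A$ (linear span, closure in $X$). *)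

From Stdlib Require Import Reals List ZArith.
Import ListNotations.
Open Scope R_scope.

(* Elements of R^N; l^oo is the set of bounded ones. *)
Definition seqR := nat -> R.

Definition bounded (x : seqR) : Prop := exists M, forall n, Rabs (x n) <= M.

(* ||x||_oo < eps, i.e. sup_n |x n| < eps (this forces x to be bounded). *)
Definition supnorm_lt (x : seqR) (eps : R) : Prop :=
  exists c, c < eps /\ forall n, Rabs (x n) <= c.

Definition zero : seqR := fun _ => 0.
Definition sub (x y : seqR) : seqR := fun n => x n - y n.
Definition scale (r : R) (x : seqR) : seqR := fun n => r * x n.

Definition nbhd0 (W : seqR -> Prop) : Prop :=
  exists eps, 0 < eps /\ forall x, supnorm_lt x eps -> W x.

(* sum_{a in F} c a * a  (F a list, used with NoDup for a finite set). *)
Definition lincomb (c : seqR -> R) (F : list seqR) : seqR :=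
  fun n => fold_right (fun a s => c a * a n + s) 0 F.

Definition subset_l00_minus0 (A : seqR -> Prop) : Prop :=
  forall a, A a -> bounded a /\ a <> zero.

Definition topologically_independent (A : seqR -> Prop) : Prop :=
  subset_l00_minus0 A /\
  forall W, nbhd0 W -> exists U, nbhd0 U /\
    forall (F : list seqR) (z : seqR -> Z),
      NoDup F -> Forall A F ->
      U (lincomb (fun a => IZR (z a)) F) ->
      forall a, In a F -> W (scale (IZR (z a)) a).

Definition topologically_linearly_independent (A : seqR -> Prop) : Prop :=
  subset_l00_minus0 A /\
  forall W, nbhd0 W -> exists U, nbhd0 U /\
    forall (F : list seqR) (z : seqR -> R),
      NoDup F -> Forall A F ->
      U (lincomb z F) ->
      forall a, In a F -> W (scale (z a) a).

Definition span (S : seqR -> Prop) (y : seqR) : Prop :=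
  exists (F : list seqR) (c : seqR -> R), Forall S F /\ y = lincomb c F.

Definition closure (S : seqR -> Prop) (x : seqR) : Prop :=
  forall eps, 0 < eps -> exists y, S y /\ supnorm_lt (sub x y) eps.

Definition minimal (A : seqR -> Prop) : Prop :=
  forall a, A a -> ~ closure (span (fun b => A b /\ b <> a)) a.

Definition e (i : nat) : seqR := fun n => if Nat.eqb n i then 1 else 0.

Definition setA (x : seqR) : Prop :=
  x = e 1 \/ exists n, (2 <= n)%nat /\ x = (fun k => e 1 k + e n k).

(* Integer combinations: a coefficient of e_1 + e_n is read off coordinate n, after
   which the coefficient of e_1 is read off coordinate 1; an integer of modulus < 1
   is 0, so the unit ball works as U for every W.  Real combinations: the averages
   (1/N) sum_{n=2}^{N+1} (e_1 + e_n) are at sup-distance 1/N from e_1, so e_1 lies in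
   the closed span of the other vectors, which a topologically linearly independent
   set forbids. *)
From Stdlib Require Import Reals List ZArith Lra Lia Classical ClassicalEpsilon
  FunctionalExtensionality.
Open Scope R_scope.

Lemma supnorm_lt_coord x eps n : supnorm_lt x eps -> Rabs (x n) < eps.
Proof. intros [c [Hc Hx]]; exact (Rle_lt_trans _ _ _ (Hx n) Hc). Qed.

Lemma supnorm_lt_Rabs_eq x y eps :
  (forall n, Rabs (y n) = Rabs (x n)) -> supnorm_lt x eps -> supnorm_lt y eps.
Proof. intros Hxy [c [Hc Hx]]; exists c; split; [exact Hc|]; intros n; rewrite Hxy; apply Hx. Qed.

Lemma lincomb_cons c a F n : lincomb c (a :: F) n = c a * a n + lincomb c F n.
Proof. reflexivity. Qed.

Lemma lincomb_ext c d F n :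
  (forall a, In a F -> c a = d a) -> lincomb c F n = lincomb d F n.
Proof.
  induction F as [|a F IH]; intros H; [reflexivity|].
  rewrite !lincomb_cons, H, IH; [reflexivity| |now left].
  intros b Hb; apply H; now right.
Qed.

Lemma lincomb_eq0 c F n : (forall b, In b F -> c b * b n = 0) -> lincomb c F n = 0.
Proof.
  induction F as [|a F IH]; intros H; [reflexivity|].
  rewrite lincomb_cons, H, IH; [ring| |now left].
  intros b Hb; apply H; now right.
Qed.

Lemma lincomb_single c F a n : NoDup F -> In a F ->
  (forall b, In b F -> b <> a -> c b * b n = 0) -> lincomb c F n = c a * a n.
Proof.
  induction F as [|b F IH]; intros ND Ha H; [destruct Ha|].
  apply NoDup_cons_iff in ND as [HbF ND]; rewrite lincomb_cons.
  destruct (classic (b = a)) as [->|Hba].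
  - rewrite lincomb_eq0; [ring|].
    intros b Hb; apply H; [now right|]; intros ->; contradiction.
  - destruct Ha as [Ha|Ha]; [contradiction|].
    rewrite H, IH; [ring|exact ND|exact Ha| |now left|exact Hba].
    intros b' Hb'; apply H; now right.
Qed.

Lemma tli_not_approximable A a :
  topologically_linearly_independent A -> A a ->
  exists d, 0 < d /\ forall F c, NoDup F -> Forall (fun b => A b /\ b <> a) F ->
    ~ supnorm_lt (sub a (lincomb c F)) d.
Proof.
  intros [HA Htli] Ha.
  destruct (HA a Ha) as [_ Ha0].
  assert (Hn : exists n, a n <> 0).
  { apply not_all_not_ex; intros Hall; apply Ha0.
    apply functional_extensionality; intros n; apply NNPP, Hall. }
  destruct Hn as [n Hn].
  destruct (Htli (fun x => supnorm_lt x (Rabs (a n)))) as [U [[d [Hd HU]] HUW]].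
  { exists (Rabs (a n)); split; [now apply Rabs_pos_lt|tauto]. }
  exists d; split; [exact Hd|]; intros F c ND HF Happrox.
  rewrite Forall_forall in HF.
  assert (HaF : ~ In a F) by (intros Hin; exact (proj2 (HF a Hin) eq_refl)).
  (* coefficient -1 on a and c elsewhere: the combination is -(a - sum c b b) *)
  set (z := fun b => if excluded_middle_informative (b = a) then -1 else c b).
  assert (Hza : z a = -1).
  { unfold z; destruct (excluded_middle_informative (a = a)); congruence. }
  assert (HzF : forall k, lincomb z F k = lincomb c F k).
  { intros k; apply lincomb_ext; intros b Hb; unfold z.
    destruct (excluded_middle_informative (b = a)) as [->|]; [contradiction|reflexivity]. }
  assert (Hsmall : supnorm_lt (scale (z a) a) (Rabs (a n))).
  { apply (HUW (a :: F)); [now constructor| | |now left].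
    - constructor; [exact Ha|]; rewrite Forall_forall; intros b Hb; apply HF, Hb.
    - apply HU; revert Happrox; apply supnorm_lt_Rabs_eq; intros k.
      rewrite lincomb_cons, HzF, Hza; unfold sub.
      rewrite <- Rabs_Ropp; f_equal; ring. }
  apply (supnorm_lt_coord _ _ n) in Hsmall.
  unfold scale in Hsmall; rewrite Hza in Hsmall.
  replace (-1 * a n) with (- a n) in Hsmall by ring; rewrite Rabs_Ropp in Hsmall; lra.
Qed.

Lemma e_diag i : e i i = 1.
Proof. unfold e; rewrite Nat.eqb_refl; reflexivity. Qed.

Lemma e_offdiag i n : n <> i -> e i n = 0.
Proof. intros H; unfold e; destruct (Nat.eqb_spec n i); [contradiction|reflexivity]. Qed.

Definition e1_plus_e (n : nat) : seqR := fun k => e 1 k + e n k.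

Lemma e1_plus_e_diag n : (2 <= n)%nat -> e1_plus_e n n = 1.
Proof. intros; unfold e1_plus_e; rewrite e_diag, e_offdiag by lia; ring. Qed.

Lemma e1_plus_e_neq_e1 n : (2 <= n)%nat -> e1_plus_e n <> e 1.
Proof.
  intros Hn H; assert (Hnn : e1_plus_e n n = e 1 n) by (rewrite H; reflexivity).
  rewrite e1_plus_e_diag, e_offdiag in Hnn by lia; lra.
Qed.

Lemma e1_plus_e_inj m n : (2 <= m)%nat -> e1_plus_e m = e1_plus_e n -> m = n.
Proof.
  intros Hm H; assert (Hmm : e1_plus_e m m = e1_plus_e n m) by (rewrite H; reflexivity).
  rewrite e1_plus_e_diag in Hmm by exact Hm; unfold e1_plus_e, e in Hmm.
  destruct (Nat.eqb_spec m 1), (Nat.eqb_spec m n); try lia; lra.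
Qed.

Lemma setA_cases b :
  setA b -> b = e 1 \/ exists m, (2 <= m)%nat /\ b = e1_plus_e m.
Proof. intros [H|[m [Hm H]]]; [now left|right; now exists m]. Qed.

Lemma setA_coord1 b : setA b -> b 1%nat = 1.
Proof.
  intros Hb; destruct (setA_cases b Hb) as [->|[m [Hm ->]]]; [apply e_diag|].
  unfold e1_plus_e; rewrite e_diag, (e_offdiag m) by lia; ring.
Qed.

Lemma setA_coord_offdiag b n :
  setA b -> (2 <= n)%nat -> b <> e1_plus_e n -> b n = 0.
Proof.
  intros Hb Hn Hne; destruct (setA_cases b Hb) as [->|[m [Hm ->]]].
  - apply e_offdiag; lia.
  - destruct (Nat.eq_dec m n) as [->|Hmn]; [contradiction|].
    unfold e1_plus_e; rewrite !e_offdiag by lia; ring.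
Qed.

Lemma setA_subset_l00_minus0 : subset_l00_minus0 setA.
Proof.
  intros a Ha; split.
  - exists 2; intros n; destruct (setA_cases a Ha) as [->|[m [_ ->]]].
    + unfold e; destruct (Nat.eqb n 1); rewrite ?Rabs_R1, ?Rabs_R0; lra.
    + unfold e1_plus_e, e; destruct (Nat.eqb n 1), (Nat.eqb n m);
        rewrite Rabs_right; lra.
  - intros H; assert (H1 : a 1%nat = zero 1%nat) by (rewrite H; reflexivity).
    rewrite setA_coord1 in H1 by exact Ha; unfold zero in H1; lra.
Qed.

Section CoefficientsInSetA.

Variables (c : seqR -> R) (F : list seqR).
Hypotheses (HND : NoDup F) (HF : Forall setA F).

Lemma lincomb_setA_coord n : (2 <= n)%nat -> In (e1_plus_e n) F ->
  lincomb c F n = c (e1_plus_e n).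
Proof.
  intros Hn Hin; rewrite Forall_forall in HF.
  rewrite (lincomb_single c F (e1_plus_e n) n HND Hin); [now rewrite e1_plus_e_diag, Rmult_1_r|].
  intros b Hb Hne; rewrite (setA_coord_offdiag b n) by auto; ring.
Qed.

Lemma lincomb_setA_coord1 :
  In (e 1) F -> (forall n, (2 <= n)%nat -> In (e1_plus_e n) F -> c (e1_plus_e n) = 0) ->
  lincomb c F 1%nat = c (e 1).
Proof.
  intros Hin Hc; rewrite Forall_forall in HF.
  rewrite (lincomb_single c F (e 1) 1 HND Hin); [now rewrite e_diag, Rmult_1_r|].
  intros b Hb Hne; destruct (setA_cases b (HF b Hb)) as [->|[m [Hm ->]]];
    [contradiction|rewrite Hc by auto; ring].
Qed.

End CoefficientsInSetA.

Lemma IZR_Rabs_lt1 z : Rabs (IZR z) < 1 -> z = 0%Z.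
Proof.
  intros H; rewrite <- abs_IZR in H; apply lt_IZR in H; lia.
Qed.

Lemma setA_topologically_independent : topologically_independent setA.
Proof.
  split; [exact setA_subset_l00_minus0|].
  intros W [eps [Heps HW]]; exists (fun x => supnorm_lt x 1); split.
  { exists 1; split; [lra|tauto]. }
  intros F z ND HF Hsmall a Ha.
  set (c := fun b => IZR (z b)).
  assert (Hn : forall n, (2 <= n)%nat -> In (e1_plus_e n) F -> c (e1_plus_e n) = 0).
  { intros n Hn Hin; unfold c; rewrite (IZR_Rabs_lt1 (z (e1_plus_e n))); [reflexivity|].
    fold (c (e1_plus_e n)); rewrite <- (lincomb_setA_coord c F ND HF n Hn Hin).
    exact (supnorm_lt_coord _ _ n Hsmall). }
  assert (Hza : c a = 0).
  { destruct (setA_cases a (proj1 (Forall_forall _ _) HF a Ha)) as [->|[m [Hm ->]]];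
      [|now apply Hn].
    unfold c; rewrite (IZR_Rabs_lt1 (z (e 1))); [reflexivity|].
    fold (c (e 1)); rewrite <- (lincomb_setA_coord1 c F ND HF Ha Hn).
    exact (supnorm_lt_coord _ _ 1 Hsmall). }
  apply HW; exists 0; split; [exact Heps|]; intros n; unfold scale.
  fold (c a); rewrite Hza, Rmult_0_l, Rabs_R0; lra.
Qed.

Lemma lincomb_const_e1_plus_e_coord1 r s N : (2 <= s)%nat ->
  lincomb (fun _ => r) (map e1_plus_e (seq s N)) 1%nat = INR N * r.
Proof.
  revert s; induction N as [|N IH]; intros s Hs; [simpl; ring|].
  simpl map; rewrite lincomb_cons, IH by lia.
  unfold e1_plus_e; rewrite e_diag, (e_offdiag s), S_INR by lia; ring.
Qed.

Lemma lincomb_const_e1_plus_e_coord r s N k : k <> 1%nat ->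
  lincomb (fun _ => r) (map e1_plus_e (seq s N)) k =
  if andb (s <=? k)%nat (k <? s + N)%nat then r else 0.
Proof.
  intros Hk; revert s; induction N as [|N IH]; intros s.
  - simpl; destruct (Nat.leb_spec s k), (Nat.ltb_spec k (s + 0)); simpl; try lia; reflexivity.
  - simpl map; rewrite lincomb_cons, IH; unfold e1_plus_e, e.
    destruct (Nat.eqb_spec k 1); [contradiction|].
    destruct (Nat.eqb_spec k s), (Nat.leb_spec s k), (Nat.ltb_spec k (s + S N)),
      (Nat.leb_spec (S s) k), (Nat.ltb_spec k (S s + N)); simpl; try lia; ring.
Qed.

Lemma e1_approximable eps : 0 < eps ->
  exists F c, NoDup F /\ Forall (fun b => setA b /\ b <> e 1) F /\
    supnorm_lt (sub (e 1) (lincomb c F)) eps.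
Proof.
  intros Heps; destruct (archimed_cor1 eps Heps) as [N [HNeps HN]].
  assert (HNpos : 0 < INR N) by (apply lt_0_INR; lia).
  exists (map e1_plus_e (seq 2 N)), (fun _ => / INR N); split; [|split].
  - apply NoDup_map_NoDup_ForallPairs; [|apply seq_NoDup].
    intros m n Hm _; apply in_seq in Hm; apply e1_plus_e_inj; lia.
  - rewrite Forall_forall; intros b Hb; apply in_map_iff in Hb as [m [<- Hm]].
    apply in_seq in Hm; split; [right; exists m; split; [lia|reflexivity]|].
    apply e1_plus_e_neq_e1; lia.
  - exists (/ INR N); split; [exact HNeps|]; intros k; unfold sub.
    assert (Hinv : 0 < / INR N) by now apply Rinv_0_lt_compat.
    destruct (Nat.eq_dec k 1) as [->|Hk].
    + rewrite lincomb_const_e1_plus_e_coord1, e_diag, Rinv_r by (lia || lra).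
      rewrite Rminus_diag, Rabs_R0; lra.
    + rewrite lincomb_const_e1_plus_e_coord, e_offdiag by exact Hk.
      destruct (andb _ _); rewrite ?Rminus_diag, Rabs_left1; lra.
Qed.

Lemma setA_not_minimal : ~ minimal setA.
Proof.
  intros Hmin; apply (Hmin (e 1) (or_introl eq_refl)); intros eps Heps.
  destruct (e1_approximable eps Heps) as [F [c [_ [HF Happrox]]]].
  exists (lincomb c F); split; [now exists F, c|exact Happrox].
Qed.

Lemma setA_not_topologically_linearly_independent :
  ~ topologically_linearly_independent setA.
Proof.
  intros Htli.
  destruct (tli_not_approximable setA (e 1) Htli (or_introl eq_refl)) as [d [Hd Hfar]].
  destruct (e1_approximable d Hd) as [F [c [ND [HF Happrox]]]].
  exact (Hfar F c ND HF Happrox).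
Qed.

Theorem mainTheorem13 :
  topologically_independent setA /\ ~ minimal setA /\
  ~ topologically_linearly_independent setA.
Proof.
  split; [exact setA_topologically_independent|].
  split; [exact setA_not_minimal|exact setA_not_topologically_linearly_independent].
Qed.
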